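(* Let $n,m\ge1$, $c_1,\dots,c_n>0$, $T>0$, $\epsilon>0$, $\kappa_{ij}\ge0$, $\bar r_1,\dots,\bar r_m>0$, $R=\prod_i[0,\bar r_i]$. For each $i$ let $p_i:\mathbb{R}\to[0,1]$ be continuous and nonincreasing, with $p_i(\tau)=1$ for $\tau\le0$ and $p_i(\tau)\to0$ as $\tau\to\infty$, and let $U_i:[0,\bar r_i]\to\mathbb{R}$ be continuous, nondecreasing and strictly concave, such that for every $\tau\in\mathbb{R}$, $\bar r_ip_i(\tau)$ is the maximizer of $U_i(r)-\tau r$ over $r\in[0,\bar r_i]$. Define $\mu_j(q_j)=0$ for $q_j\le c_j$, $\mu_j(q_j)=T(1-c_j/q_j)$ for $q_j>c_j$; $\delta_{ij}(\mu)=e^{-(\kappa_{ij}+\mu_j)/\epsilon}/\sum_ke^{-(\kappa_{ik}+\mu_k)/\epsilon}$; $\varphi^i_\epsilon(\mu)=-\epsilon\log\sum_je^{-(\kappa_{ij}+\mu_j)/\epsilon}$; and $$W(r,\mu)=\sum_i[r_i\varphi^i_\epsilon(\mu)-U_i(r_i)]+\sum_jc_j\log(1-\mu_j/T)\quad\text{on } R\times[0,T)^n.$$ Consider the elastic dynamics $$\dot q_j=\sum_ix_{ij}-\frac{q_j}{T},\quad \mu_j=\mu_j(q_j),\quad x_{ij}=r_i\delta_{ij}(\mu),\quad r_i=\bar r_ip_i(\varphi^i_\epsilon(\mu)),$$ and call $(X^*,q^*,\mu^*,r^* )$ an equilibrium point if $\mu^*_j=\mu_j(q^*_j)$, $r^*_i=\bar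 r_ip_i(\varphi^i_\epsilon(\mu^* ))$, $x^*_{ij}=r^*_i\delta_{ij}(\mu^* )$ and $\sum_ix^*_{ij}=q^*_j/T$ for all $i,j$. Then the following are equivalent: (i) $(r^*,\mu^* )$ is the saddle point of $W$ (i.e. $W(r^*,\mu)\le W(r^*,\mu^* )\le W(r,\mu^* )$ for all $r\in R$, $\mu\in[0,T)^n$), and $(X^*,q^* )$ is the solution of the problem of minimizing $\sum_{i,j}\kappa_{ij}x_{ij}+\sum_j\beta_j(q_j)+\epsilon\sum_{i,j}x_{ij}\log(x_{ij}/r^*_i)$ subject to $x_{ij}\ge0$, $\sum_jx_{ij}=r^*_i$, $\sum_ix_{ij}=q_j/T$, where $\beta_j(q)=0$ for $q\le c_j$ and $\beta_j(q)=q-c_j-c_j\log(q/c_j)$ for $q>c_j$; (ii) $(X^*,q^*,\mu^*,r^* )$ is an equilibrium point of the elastic dynamics. In particular, the elastic dynamics have a unique equilibrium point.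
   Context: Convention $0\log0=0$ (terms with $x_{ij}=0$ contribute zero). $p_i(\tau)$ is the probability that a customer from location $i$ is willing to wait longer than $\tau$, $\bar r_i$ the maximal request rate, and $U_i$ the associated utility, whose inverse derivative gives the demand curve $\bar r_ip_i$; strict concavity of $U_i$ is the paper's Assumption 1. *)

From HB Require Import structures.
From mathcomp Require Import all_boot all_order all_algebra.
From mathcomp Require Import all_classical all_reals all_analysis.
Set Implicit Arguments. Unset Strict Implicit. Unset Printing Implicit Defensive.
Import Order.TTheory GRing.Theory Num.Theory numFieldNormedType.Exports.
Local Open Scope ring_scope.

Section ElasticDefs.
Variable R : realType.
Variables m n : nat.
(* i : 'I_m ranges over customer locations, j : 'I_n over stations. *)

Definition mu_of (T c q : R) : R := if q <= c then 0 else T * (1 - c / q).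

Definition beta (c q : R) : R := if q <= c then 0 else q - c - c * ln (q / c).

Definition expo (kappa : 'I_m -> 'I_n -> R) (eps : R) (mu : 'I_n -> R)
  (i : 'I_m) (j : 'I_n) : R := expR (- (kappa i j + mu j) / eps).

Definition delta (kappa : 'I_m -> 'I_n -> R) (eps : R) (mu : 'I_n -> R)
  (i : 'I_m) (j : 'I_n) : R :=
  expo kappa eps mu i j / \sum_(k < n) expo kappa eps mu i k.

Definition phi (kappa : 'I_m -> 'I_n -> R) (eps : R) (mu : 'I_n -> R)
  (i : 'I_m) : R := - eps * ln (\sum_(j < n) expo kappa eps mu i j).

Definition W (U : 'I_m -> R -> R) (c : 'I_n -> R) (T : R)
  (kappa : 'I_m -> 'I_n -> R) (eps : R) (r : 'I_m -> R) (mu : 'I_n -> R) : R :=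
  \sum_(i < m) (r i * phi kappa eps mu i - U i (r i))
  + \sum_(j < n) c j * ln (1 - mu j / T).

Definition xlog (x y : R) : R := if x == 0 then 0 else x * ln (x / y).

Definition in_Rbox (rbar : 'I_m -> R) (r : 'I_m -> R) : Prop :=
  forall i, 0 <= r i <= rbar i.

Definition in_Mbox (T : R) (mu : 'I_n -> R) : Prop := forall j, 0 <= mu j < T.

Definition saddle (U : 'I_m -> R -> R) (c : 'I_n -> R) (T : R)
  (kappa : 'I_m -> 'I_n -> R) (eps : R) (rbar : 'I_m -> R)
  (rs : 'I_m -> R) (mus : 'I_n -> R) : Prop :=
  in_Rbox rbar rs /\ in_Mbox T mus /\
  (forall mu, in_Mbox T mu -> W U c T kappa eps rs mu <= W U c T kappa eps rs mus) /\
  (forall r, in_Rbox rbar r -> W U c T kappa eps rs mus <= W U c T kappa eps r mus).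

Definition feasible (T : R) (rs : 'I_m -> R)
  (X : 'I_m -> 'I_n -> R) (q : 'I_n -> R) : Prop :=
  (forall i j, 0 <= X i j) /\
  (forall i, \sum_(j < n) X i j = rs i) /\
  (forall j, \sum_(i < m) X i j = q j / T).

Definition objective (kappa : 'I_m -> 'I_n -> R) (c : 'I_n -> R) (eps : R)
  (rs : 'I_m -> R) (X : 'I_m -> 'I_n -> R) (q : 'I_n -> R) : R :=
  \sum_(i < m) \sum_(j < n) kappa i j * X i j
  + \sum_(j < n) beta (c j) (q j)
  + eps * \sum_(i < m) \sum_(j < n) xlog (X i j) (rs i).

Definition solves_transport (kappa : 'I_m -> 'I_n -> R) (c : 'I_n -> R)
  (T eps : R) (rs : 'I_m -> R) (X : 'I_m -> 'I_n -> R) (q : 'I_n -> R) : Prop :=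
  feasible T rs X q /\
  forall X' q', feasible T rs X' q' ->
    objective kappa c eps rs X q <= objective kappa c eps rs X' q'.

Definition equilibrium (p : 'I_m -> R -> R) (c : 'I_n -> R) (T eps : R)
  (kappa : 'I_m -> 'I_n -> R) (rbar : 'I_m -> R)
  (X : 'I_m -> 'I_n -> R) (q mu : 'I_n -> R) (r : 'I_m -> R) : Prop :=
  (forall j, mu j = mu_of T (c j) (q j)) /\
  (forall i, r i = rbar i * p i (phi kappa eps mu i)) /\
  (forall i j, X i j = r i * delta kappa eps mu i j) /\
  (forall j, \sum_(i < m) X i j = q j / T).

End ElasticDefs.

From Pilot Require Import Defs.
From HB Require Import structures.
From mathcomp Require Import all_boot all_order all_algebra.
From mathcomp Require Import all_classical all_reals all_analysis.
From mathcomp Require Import ring lra.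
Set Implicit Arguments. Unset Strict Implicit. Unset Printing Implicit Defensive.
Import Order.TTheory GRing.Theory Num.Theory numFieldNormedType.Exports.
Local Open Scope ring_scope.
Local Open Scope classical_set_scope.

(* W(r, mu) is concave in mu, strictly so because of the terms c_j log (1 - mu_j / T),
   with gradient (inflow_j - c_j / (T - mu_j))_j where inflow_j = sum_i r_i delta_ij(mu);
   so mu maximizes W(r, .) on [0,T)^n iff the complementary slackness conditions [kkt]
   hold, and these say exactly mu_j = mu_j(T inflow_j).  In r, W is minimized at
   r_i = rbar_i p_i(phi_i(mu)) by the defining property of p_i, uniquely by strict
   concavity of U_i.  Hence saddle points and equilibria coincide.  The transport
   objective is eps KL(X | r delta(mu)) plus terms that the subgradient inequality of
   beta_j (with slope mu_j(q_j) / T) minimizes at q = T inflow, so (r delta(mu), T inflow)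
   is its unique solution.  An equilibrium exists because mu |-> W(rho(mu), mu) attains
   its maximum on [0,T)^n (it tends to -oo as some mu_j -> T), and the first-order
   conditions there are [kkt]; it is unique by the saddle-point exchange argument and
   the strict concavity in mu. *)

Section Elementary.
Variable R : realType.
Implicit Types (a b c x y z t : R).

Lemma ln_le_sub1 x : 0 < x -> ln x <= x - 1.
Proof. by move=> x0; have := expR_ge1Dx (ln x); rewrite lnK ?posrE //; lra. Qed.

Lemma ln_lt_sub1 x : 0 < x -> x != 1 -> ln x < x - 1.
Proof.
move=> x0 x1; have lx : ln x != 0.
  by apply: contra x1 => /eqP lx0; rewrite -[x]lnK ?posrE // lx0 expR0.
by have := expR_gt1Dx lx; rewrite lnK ?posrE //; lra.
Qed.

Lemma ln_lt_tangent y z : 0 < y -> 0 < z -> y != z -> ln y < ln z + (y - z) / z.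
Proof.
move=> y0 z0 yz; have yz0 : 0 < y / z by rewrite divr_gt0.
have -> : ln y = ln z + ln (y / z) by rewrite ln_div ?posrE //; ring.
have -> : (y - z) / z = y / z - 1 by field; rewrite gt_eqF.
rewrite ltrD2l ln_lt_sub1 //; apply: contra yz => /eqP yz1.
by rewrite -[y](mulfVK (lt0r_neq0 z0)) yz1 mul1r.
Qed.

Lemma ln_slack_lt T a b : 0 < T -> a < T -> b < T -> a != b ->
  ln (1 - a / T) < ln (1 - b / T) - (a - b) / (T - b).
Proof.
move=> T0 aT bT ab; have Tb : T - b != 0 by rewrite subr_eq0 gt_eqF.
have slack x : 1 - x / T = (T - x) / T by field; rewrite gt_eqF.
have slack_gt0 x : x < T -> 0 < 1 - x / T.
  by move=> xT; rewrite slack divr_gt0 // subr_gt0.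
have ab' : 1 - a / T != 1 - b / T.
  rewrite -subr_eq0 (_ : _ - _ = (b - a) / T); last by field; rewrite gt_eqF.
  by rewrite mulf_eq0 invr_eq0 (gt_eqF T0) orbF subr_eq0 eq_sym.
have := ln_lt_tangent (slack_gt0 _ aT) (slack_gt0 _ bT) ab'.
suff -> : (1 - a / T - (1 - b / T)) / (1 - b / T) = - ((a - b) / (T - b)) by [].
by rewrite !slack; field; rewrite Tb gt_eqF.
Qed.

Lemma ln_slack_le T a b : 0 < T -> a < T -> b < T ->
  ln (1 - a / T) <= ln (1 - b / T) - (a - b) / (T - b).
Proof.
move=> T0 aT bT; have [->|ab] := eqVneq a b; first by rewrite subrr mul0r subr0.
exact/ltW/ln_slack_lt.
Qed.

Lemma expR_jensen k (w a : 'I_k -> R) : (forall j, 0 <= w j) -> \sum_j w j = 1 ->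
  expR (\sum_j w j * a j) <= \sum_j w j * expR (a j).
Proof.
move=> w0 w1; set A := \sum_j w j * a j.
have tangent j : w j * (expR A * (1 + a j - A)) <= w j * expR (a j).
  apply: ler_wpM2l => //.
  have -> : expR (a j) = expR A * expR (a j - A) by rewrite -expRD; congr expR; ring.
  by rewrite ler_wpM2l ?expR_ge0 // -addrA expR_ge1Dx.
apply: le_trans (ler_sum _ (fun j _ => tangent j)).
rewrite (eq_bigr (fun j => expR A * w j + expR A * (w j * a j) - expR A * A * w j));
  last by move=> j _; ring.
by rewrite sumrB big_split /= -!big_distrr /= w1 -/A; lra.
Qed.

Lemma ltr_sum_ord k (F G : 'I_k -> R) j0 :
  (forall j, F j <= G j) -> F j0 < G j0 -> \sum_j F j < \sum_j G j.
Proof.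
move=> FG FG0; rewrite (bigD1 j0) //= [X in _ < X](bigD1 j0) //=.
by apply: ltr_leD => //; apply: ler_sum => j _.
Qed.

Lemma sumr_ord_gt0 k (F : 'I_k -> R) : (0 < k)%N -> (forall j, 0 < F j) -> 0 < \sum_j F j.
Proof.
move=> k0 F0; have := ltr_sum_ord (F := fun _ => 0) (j0 := Ordinal k0) (fun j => ltW (F0 j)).
by rewrite big1_eq; apply.
Qed.

Lemma cvg_sum_ord (Y : Type) (F : set_system Y) (FF : Filter F) k
    (f : 'I_k -> Y -> R) (l : 'I_k -> R) :
  (forall j, f j y @[y --> F] --> l j) -> \sum_j f j y @[y --> F] --> \sum_j l j.
Proof. by move=> fl; apply: cvg_big => //; exact: add_continuous. Qed.

Lemma continuous_of_sandwich (d g : R -> R) : continuous d ->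
  (forall t t', d t' * (t' - t) <= g t' - g t <= d t * (t' - t)) -> continuous g.
Proof.
move=> dC dg t.
have lin0 (e : R -> R) : e x @[x --> t] --> e t -> e x * (x - t) @[x --> t] --> 0.
  move=> et; rewrite -(mulr0 (e t)) -(subrr t).
  by apply: cvgM => //; apply: cvgB => //; exact: cvg_cst.
have gt : g x - g t @[x --> t] --> 0.
  apply: (squeeze_cvgr _ (lin0 _ (dC t)) (lin0 _ (cvg_cst (d t)))).
  by apply: nearW => x; exact: dg.
exact/subr_cvg0.
Qed.

Lemma near0_both_sides (P : R -> Prop) d : 0 < d ->
  (\forall h \near 0, P h) -> exists h, 0 < h < d /\ P h /\ P (- h).
Proof.
move=> d0 /nbhs_normP [e e0 Pe].
have me0 : 0 < Num.min e d by rewrite lt_min e0 d0.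
have med : Num.min e d <= d by rewrite ge_min lexx orbT.
have mee : Num.min e d <= e by rewrite ge_min lexx.
exists (Num.min e d / 2); split; first by apply/andP; split; lra.
by split; apply: Pe; rewrite /= sub0r ?opprK ?normrN ger0_norm; lra.
Qed.

Lemma first_order_max (S : R -> R) a b : 0 <= a < b -> S h @[h --> 0] --> S 0 ->
  (forall h, 0 <= a + h < b -> h * S h <= 0) -> S 0 <= 0 /\ (0 < a -> S 0 = 0).
Proof.
move=> /andP[a0 ab] S0 hS; have S0le : S 0 <= 0.
  rewrite leNgt; apply/negP => S0gt; have ba : 0 < b - a by rewrite subr_gt0.
  have [h [/andP[h0 hd] [Sh _]]] := near0_both_sides ba (cvgr_gt _ S0 _ S0gt).
  by have := hS h ltac:(apply/andP; split; lra); have := mulr_gt0 h0 Sh; lra.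
split=> // a_gt0; apply/eqP; rewrite eq_le S0le /= leNgt; apply/negP => S0lt.
have [h [/andP[h0 hd] [_ Sh]]] := near0_both_sides a_gt0 (cvgr_lt _ S0 _ S0lt).
have := hS (- h) ltac:(apply/andP; split; lra).
have : 0 < h * - S (- h) by rewrite mulr_gt0 // oppr_gt0.
by rewrite mulrN mulNr; lra.
Qed.

Lemma strict_concave_argmax_unique (f : R -> R) b t x y :
  (forall x y s, 0 <= x <= b -> 0 <= y <= b -> x != y -> 0 < s < 1 ->
     s * f x + (1 - s) * f y < f (s * x + (1 - s) * y)) ->
  (forall z, 0 <= z <= b -> f z - t * z <= f x - t * x) ->
  0 <= x <= b -> 0 <= y <= b -> f y - t * y = f x - t * x -> y = x.
Proof.
move=> fconc xmax xb yb fxy; apply/eqP; apply: contraT => yx.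
have half : 0 < (1 / 2 : R) < 1 by apply/andP; split; lra.
have := fconc _ _ _ yb xb yx half.
have := xmax (1 / 2 * y + (1 - 1 / 2) * x).
case/andP: xb => ? ?; case/andP: yb => ? ?.
by move=> /(_ ltac:(apply/andP; split; lra)); lra.
Qed.

Definition kl x y := xlog x y - x + y.

Lemma kl_ge0 x y : 0 <= x -> 0 <= y -> (y = 0 -> x = 0) -> 0 <= kl x y /\ (kl x y = 0 -> x = y).
Proof.
move=> x0 y0 yx; rewrite /kl /xlog; have [->|xn0] := eqVneq x 0.
  by rewrite subr0 add0r; split => // ->.
have xp : 0 < x by rewrite lt_neqAle eq_sym xn0.
have yp : 0 < y by rewrite lt_neqAle y0 andbT eq_sym; apply/eqP => /yx/eqP; exact/negP.
have -> : x * ln (x / y) = - (x * ln (y / x)).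
  by rewrite -mulrN -lnV ?posrE ?divr_gt0 // invf_div.
have yx_lin : x * (y / x - 1) = y - x by field; rewrite gt_eqF.
have := ler_wpM2l (ltW xp) (ln_le_sub1 (divr_gt0 yp xp)); rewrite yx_lin => le.
split; first lra.
move=> kl0; apply/eqP; apply: contraT => xy.
have yx1 : y / x != 1.
  by apply: contra xy => /eqP yx1; rewrite -[y](mulfVK (lt0r_neq0 xp)) yx1 mul1r.
have : x * ln (y / x) < y - x by rewrite -yx_lin ltr_pM2l // ln_lt_sub1 // divr_gt0.
lra.
Qed.

Lemma kl_id y : kl y y = 0.
Proof.
rewrite /kl /xlog; have [->|y0] := eqVneq y 0; first by rewrite subr0 addr0.
by rewrite divff // ln1 mulr0 sub0r addNr.
Qed.

Lemma beta_subgradient T c q q' : 0 < T -> 0 < c ->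
  beta c q + mu_of T c q / T * (q' - q) <= beta c q'.
Proof.
move=> T0 c0; rewrite /beta /mu_of.
have [qc|cq] := lerP q c.
  rewrite mul0r mul0r addr0; case: (lerP q' c) => // cq'.
  have := ler_wpM2l (ltW c0) (ln_le_sub1 (divr_gt0 (lt_trans c0 cq') c0)).
  have -> : c * (q' / c - 1) = q' - c by field; rewrite gt_eqF.
  lra.
have q0 : 0 < q := lt_trans c0 cq.
have -> : T * (1 - c / q) / T = 1 - c / q by field; rewrite !gt_eqF.
case: (lerP q' c) => [q'c|cq'].
  have := ler_wpM2l (ltW c0) (ln_le_sub1 (divr_gt0 c0 q0)).
  have -> : ln (c / q) = - ln (q / c) by rewrite -lnV ?posrE ?divr_gt0 // invf_div.
  have -> : c * (c / q - 1) = c * c / q - c by field; rewrite gt_eqF.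
  have : (1 - c / q) * q' <= (1 - c / q) * c.
    by rewrite ler_wpM2l // subr_ge0 ler_pdivrMr // mul1r ltW.
  have -> : (1 - c / q) * c = c - c * c / q by field; rewrite gt_eqF.
  have -> : (1 - c / q) * (q' - q) = (1 - c / q) * q' - q + c by field; rewrite gt_eqF.
  lra.
have q'0 : 0 < q' := lt_trans c0 cq'.
have -> : ln (q' / c) = ln (q / c) + ln (q' / q).
  by rewrite -lnM ?posrE ?divr_gt0 //; congr ln; field; rewrite !gt_eqF.
have := ler_wpM2l (ltW c0) (ln_le_sub1 (divr_gt0 q'0 q0)).
have -> : c * (q' / q - 1) = c * q' / q - c by field; rewrite gt_eqF.
have -> : (1 - c / q) * (q' - q) = q' - q - c * q' / q + c by field; rewrite gt_eqF.
lra.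
Qed.

Lemma mu_of_spec T c s x : 0 < T -> 0 < c -> 0 <= s -> 0 <= x < T ->
  x = mu_of T c (T * s) <-> s - c / (T - x) <= 0 /\ (0 < x -> s - c / (T - x) = 0).
Proof.
move=> T0 c0 s0 /andP[x0 xT]; have Tx : 0 < T - x by rewrite subr_gt0.
rewrite /mu_of; case: (lerP (T * s) c) => [Tsc|cTs].
  split=> [->|[_ sat]].
    by rewrite subr0 subr_le0 ler_pdivlMr // mulrC; split=> //; rewrite ltxx.
  apply/eqP; rewrite eq_le x0 andbT leNgt; apply/negP => x_gt0.
  have sTx : s * (T - x) = c by rewrite (subr0_eq (sat x_gt0)) mulfVK ?gt_eqF.
  have : s * x <= 0 by nra.
  rewrite pmulr_lle0 // => s_le0; have : s = 0 by apply/eqP; rewrite eq_le s_le0 s0.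
  by move: sTx => /[swap] ->; rewrite mul0r; lra.
have s_gt0 : 0 < s by rewrite lt_neqAle s0 andbT eq_sym; apply/eqP => s00; move: cTs; rewrite s00; lra.
have Tmu : T - T * (1 - c / (T * s)) = c / s by field; rewrite !gt_eqF.
split=> [->|[le sat]].
  rewrite Tmu (_ : c / (c / s) = s) ?subrr; last by field; rewrite !gt_eqF.
  by split=> // _; rewrite mulr_gt0 // subr_gt0 ltr_pdivrMr ?mulr_gt0 ?mul1r.
have [x_gt0|x_le0] := ltrP 0 x.
  by rewrite (subr0_eq (sat x_gt0)); field; rewrite !gt_eqF ?mulr_gt0 ?divr_gt0.
have x00 : x = 0 by apply/eqP; rewrite eq_le x_le0 x0.
by move: le; rewrite x00 subr0 subr_le0 ler_pdivlMr // mulrC; lra.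
Qed.

Lemma mu_of_range T c q : 0 < T -> 0 < c -> 0 <= mu_of T c q < T.
Proof.
move=> T0 c0; rewrite /mu_of; case: (lerP q c) => [_|cq]; first by rewrite lexx.
have cq1 : c / q < 1 by rewrite ltr_pdivrMr ?mul1r // (lt_trans c0).
have cq0 : 0 < c / q by rewrite divr_gt0 // (lt_trans c0).
apply/andP; split; first by rewrite mulr_ge0 ?subr_ge0 ?ltW.
by rewrite gtr_pMr // gtrBl.
Qed.

End Elementary.

Section BoxExtremum.
Import ArrowAsProduct.

Lemma box_argmax (R : realType) n (b : 'I_n -> R) (G : ('I_n -> R) -> R) :
  (forall j, 0 <= b j) ->
  (forall x, (forall j, 0 <= x j <= b j) ->
     forall (Y : Type) (F : set_system Y), Filter F ->
     forall f : Y -> 'I_n -> R, (forall j, f y j @[y --> F] --> x j) ->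
     G (f y) @[y --> F] --> G x) ->
  exists2 xs, (forall j, 0 <= xs j <= b j) &
     forall x, (forall j, 0 <= x j <= b j) -> G x <= G xs.
Proof.
move=> b0 Gcvg; set K := [set x : 'I_n -> R | forall j, `[0, b j] (x j)].
have inK x : x \in K <-> forall j, 0 <= x j <= b j.
  by rewrite inE; split=> xK j; have := xK j; rewrite /= in_itv.
have K0 : K !=set0 by exists (fun=> 0) => j /=; rewrite in_itv /= lexx b0.
have Kc : compact K.
  by have := @tychonoff _ (fun=> R) (fun j => `[0, b j]) (fun j => @segment_compact R _ _).
have GK : {within K, continuous G}.
  apply: continuous_in_subspaceT => x /inK xK.
  by apply: (Gcvg x xK _ (nbhs x) _ id) => j; exact: (@proj_continuous 'I_n (fun=> R) j x).
have [xs /inK xsK xsmax] := compact_EVT_max K0 Kc GK.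
by exists xs => // x /inK; exact: xsmax.
Qed.

End BoxExtremum.

Section Model.
Variables (R : realType) (m n : nat).
Variables (c : 'I_n -> R) (T eps : R) (kappa : 'I_m -> 'I_n -> R).
Variables (rbar : 'I_m -> R) (p U : 'I_m -> R -> R).
Hypotheses (hn : (0 < n)%N) (hc : forall j, 0 < c j) (hT : 0 < T) (heps : 0 < eps).
Implicit Types (mu nu : 'I_n -> R) (r : 'I_m -> R) (X : 'I_m -> 'I_n -> R) (q : 'I_n -> R).

Local Notation expo := (expo kappa eps).
Local Notation delta := (delta kappa eps).
Local Notation phi := (phi kappa eps).
Local Notation W := (W U c T kappa eps).

Definition zsum mu i := \sum_(k < n) expo mu i k.

Lemma zsum_gt0 mu i : 0 < zsum mu i.
Proof. by apply: sumr_ord_gt0 => // j; exact: expR_gt0. Qed.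

Lemma delta_gt0 mu i j : 0 < delta mu i j.
Proof. by rewrite divr_gt0 ?expR_gt0 ?zsum_gt0. Qed.

Lemma sumr_delta mu i : \sum_j delta mu i j = 1.
Proof. by rewrite -big_distrl /= divff // gt_eqF // zsum_gt0. Qed.

Lemma ln_delta mu i j : ln (delta mu i j) = - (kappa i j + mu j) / eps - ln (zsum mu i).
Proof. by rewrite ln_div ?posrE ?expR_gt0 ?zsum_gt0 // /expo expRK. Qed.

Lemma phi_le_cost mu i j : phi mu i <= kappa i j + mu j.
Proof.
have : ln (expo mu i j) <= ln (zsum mu i).
  rewrite ler_ln ?posrE ?expR_gt0 ?zsum_gt0 // /zsum (bigD1 j) //= lerDl.
  by apply: sumr_ge0 => k _; exact: expR_ge0.
rewrite /expo expRK /phi -/(zsum mu i) => le.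
have := ler_wpM2l (ltW heps) le.
have -> : eps * (- (kappa i j + mu j) / eps) = - (kappa i j + mu j) by field; rewrite gt_eqF.
lra.
Qed.

Lemma phi_le_tangent mu nu i :
  phi mu i <= phi nu i + \sum_j delta nu i j * (mu j - nu j).
Proof.
set a := fun j => - (mu j - nu j) / eps.
have zsumE : zsum mu i = zsum nu i * \sum_j delta nu i j * expR (a j).
  rewrite big_distrr /=; apply: eq_bigr => j _.
  rewrite /Defs.delta /Defs.expo /a mulrA mulrCA divff ?gt_eqF ?zsum_gt0 //.
  by rewrite mulr1 -expRD; congr expR; rewrite -mulrDl; congr (_ / _); ring.
have jensen := expR_jensen a (fun j => ltW (delta_gt0 nu i j)) (sumr_delta nu i).
have wsum_gt0 : 0 < \sum_j delta nu i j * expR (a j).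
  by apply: sumr_ord_gt0 => // j; rewrite mulr_gt0 ?delta_gt0 ?expR_gt0.
have ln_zsum : ln (zsum nu i) + \sum_j delta nu i j * a j <= ln (zsum mu i).
  rewrite zsumE lnM ?posrE ?zsum_gt0 // lerD2l.
  by rewrite -[X in X <= _]expRK ler_ln ?posrE ?expR_gt0.
have -> : \sum_j delta nu i j * (mu j - nu j) = - eps * \sum_j delta nu i j * a j.
  by rewrite big_distrr /=; apply: eq_bigr => j _; rewrite /a; field; rewrite gt_eqF.
rewrite /Defs.phi -/(zsum mu i) -/(zsum nu i).
by have := ler_wpM2l (ltW heps) ln_zsum; lra.
Qed.

Section Continuity.
Variables (Y : Type) (F : set_system Y) (FF : Filter F) (f : Y -> 'I_n -> R) (mu : 'I_n -> R).
Hypothesis f_mu : forall k, f y k @[y --> F] --> mu k.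

Lemma cvg_expo i j : expo (f y) i j @[y --> F] --> expo mu i j.
Proof.
apply: continuous_cvg; first exact: continuous_expR.
by apply: cvgMl; apply: cvgN; apply: cvgD; [exact: cvg_cst|exact: f_mu].
Qed.

Lemma cvg_zsum i : zsum (f y) i @[y --> F] --> zsum mu i.
Proof. by apply: cvg_sum_ord => j; exact: cvg_expo. Qed.

Lemma cvg_phi i : phi (f y) i @[y --> F] --> phi mu i.
Proof.
apply: cvgMr; apply: (continuous_cvg _ (continuous_ln (zsum_gt0 mu i))).
exact: cvg_zsum.
Qed.

Lemma cvg_delta i j : delta (f y) i j @[y --> F] --> delta mu i j.
Proof.
apply: cvgM; first exact: cvg_expo.
by apply: cvgV; [rewrite gt_eqF ?zsum_gt0|exact: cvg_zsum].
Qed.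

End Continuity.

Definition inflow r mu j := \sum_i r i * delta mu i j.

Definition gradW r mu j := inflow r mu j - c j / (T - mu j).

Definition kkt r mu := in_Mbox T mu /\
  forall j, gradW r mu j <= 0 /\ (0 < mu j -> gradW r mu j = 0).

Lemma inflow_ge0 r mu j : (forall i, 0 <= r i) -> 0 <= inflow r mu j.
Proof. by move=> r0; apply: sumr_ge0 => i _; rewrite mulr_ge0 ?r0 ?ltW ?delta_gt0. Qed.

Lemma sum_gradW r mu nu : \sum_j (mu j - nu j) * gradW r nu j =
  \sum_i r i * \sum_j delta nu i j * (mu j - nu j) - \sum_j c j * (mu j - nu j) / (T - nu j).
Proof.
rewrite (eq_bigr (fun j => \sum_i r i * (delta nu i j * (mu j - nu j))
  - c j * (mu j - nu j) / (T - nu j))); last first.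
  move=> j _; rewrite /gradW /inflow mulrBr mulr_sumr; congr (_ - _); last by ring.
  by apply: eq_bigr => i _; ring.
by rewrite sumrB exchange_big; congr (_ - _); apply: eq_bigr => i _; rewrite mulr_sumr.
Qed.

Lemma W_tangent_gap r mu nu : (forall i, 0 <= r i) ->
  \sum_j c j * (ln (1 - nu j / T) - (mu j - nu j) / (T - nu j) - ln (1 - mu j / T))
  <= W r nu + \sum_j (mu j - nu j) * gradW r nu j - W r mu.
Proof.
move=> r0; rewrite sum_gradW /Defs.W.
have phi_gap : \sum_i (r i * phi mu i - U i (r i)) <=
    \sum_i (r i * phi nu i - U i (r i)) + \sum_i r i * \sum_j delta nu i j * (mu j - nu j).
  rewrite -big_split /=; apply: ler_sum => i _.
  by have := ler_wpM2l (r0 i) (phi_le_tangent mu nu i); lra.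
have -> : \sum_j c j * (ln (1 - nu j / T) - (mu j - nu j) / (T - nu j) - ln (1 - mu j / T)) =
    \sum_j c j * ln (1 - nu j / T) - \sum_j c j * (mu j - nu j) / (T - nu j)
    - \sum_j c j * ln (1 - mu j / T).
  by rewrite -!sumrB; apply: eq_bigr => j _ /=; ring.
lra.
Qed.

Lemma in_Mbox_lt mu j : in_Mbox T mu -> mu j < T.
Proof. by move=> /(_ j)/andP[]. Qed.

Lemma W_le_tangent r mu nu : (forall i, 0 <= r i) -> in_Mbox T mu -> in_Mbox T nu ->
  W r mu <= W r nu + \sum_j (mu j - nu j) * gradW r nu j.
Proof.
move=> r0 muT nuT; rewrite -subr_ge0; apply: le_trans (W_tangent_gap _ _ r0).
apply: sumr_ge0 => j _; apply: mulr_ge0; first exact: ltW.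
by have := ln_slack_le hT (in_Mbox_lt j muT) (in_Mbox_lt j nuT); lra.
Qed.

Lemma W_lt_tangent r mu nu j0 : (forall i, 0 <= r i) -> in_Mbox T mu -> in_Mbox T nu ->
  mu j0 != nu j0 -> W r mu < W r nu + \sum_j (mu j - nu j) * gradW r nu j.
Proof.
move=> r0 muT nuT mu_nu; rewrite -subr_gt0; apply: lt_le_trans (W_tangent_gap _ _ r0).
have slack_gap j : mu j != nu j ->
    0 < ln (1 - nu j / T) - (mu j - nu j) / (T - nu j) - ln (1 - mu j / T).
  by move=> ne; have := ln_slack_lt hT (in_Mbox_lt j muT) (in_Mbox_lt j nuT) ne; lra.
apply: (le_lt_trans _ (ltr_sum_ord (F := fun=> 0) (j0 := j0) _ _)) => [|j|].
- by rewrite big1_eq.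
- have [->|ne] := eqVneq (mu j) (nu j); first by rewrite subrr mul0r subr0 subrr mulr0.
  by rewrite mulr_ge0 ?ltW ?slack_gap.
- by rewrite mulr_gt0 ?slack_gap.
Qed.

Lemma kkt_sum_gradW_le0 r mu nu : kkt r nu -> in_Mbox T mu ->
  \sum_j (mu j - nu j) * gradW r nu j <= 0.
Proof.
move=> [nuT kkt_nu] muT; apply: sumr_le0 => j _; have [grad_le0 grad_eq0] := kkt_nu j.
have [nu_gt0|nu_le0] := ltrP 0 (nu j); first by rewrite grad_eq0 // mulr0.
have -> : nu j = 0 by apply/eqP; rewrite eq_le nu_le0; case/andP: (nuT j).
by rewrite subr0 mulr_ge0_le0 //; case/andP: (muT j).
Qed.

Lemma kkt_W_le r mu nu : (forall i, 0 <= r i) -> kkt r nu -> in_Mbox T mu -> W r mu <= W r nu.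
Proof.
move=> r0 kkt_nu muT; have := W_le_tangent r0 muT kkt_nu.1.
by have := kkt_sum_gradW_le0 kkt_nu muT; lra.
Qed.

Lemma kkt_W_lt r mu nu : (forall i, 0 <= r i) -> kkt r nu -> in_Mbox T mu -> mu <> nu ->
  W r mu < W r nu.
Proof.
move=> r0 kkt_nu muT mu_nu; have [j0 /negP ne] : exists j, ~ (mu j == nu j).
  by apply/existsNP => eq; apply/mu_nu/funext => j; exact/eqP.
have := W_lt_tangent r0 muT kkt_nu.1 ne.
by have := kkt_sum_gradW_le0 kkt_nu muT; lra.
Qed.

Definition perturb (x : 'I_n -> R) j h : 'I_n -> R :=
  fun k => if k == j then x k + h else x k.

Lemma cvg_perturb x j k : perturb x j h k @[h --> 0] --> x k.
Proof.
rewrite /perturb; case: eqP => _; last exact: cvg_cst.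
by rewrite -[X in _ --> X]addr0; apply: cvgD; [exact: cvg_cst|exact: cvg_id].
Qed.

Lemma first_order_argmax (G : ('I_n -> R) -> R) (grad : ('I_n -> R) -> 'I_n -> R) mus :
  in_Mbox T mus -> (forall mu, in_Mbox T mu -> G mu <= G mus) ->
  (forall nu, in_Mbox T nu -> G mus <= G nu + \sum_j (mus j - nu j) * grad nu j) ->
  (forall j, grad (perturb mus j h) j @[h --> 0] --> grad mus j) ->
  forall j, grad mus j <= 0 /\ (0 < mus j -> grad mus j = 0).
Proof.
move=> musT Gmax Gtan grad_cvg j.
have perturbT h : 0 <= mus j + h < T -> in_Mbox T (perturb mus j h).
  by move=> hT' k; rewrite /perturb; case: eqP => [->|_]; [exact: hT'|exact: musT].
have perturb0 : perturb mus j 0 = mus.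
  by apply/funext => k; rewrite /perturb addr0; case: eqP.
have := first_order_max (S := fun h => grad (perturb mus j h) j) (musT j).
rewrite /= perturb0; apply; first exact: grad_cvg.
move=> h hh; have := Gtan _ (perturbT h hh); have := Gmax _ (perturbT h hh).
rewrite (bigD1 j) //= big1 => [|k kj]; last by rewrite /perturb (negbTE kj) subrr mul0r.
have -> : mus j - perturb mus j h j = - h by rewrite /perturb eqxx; ring.
by rewrite mulNr; lra.
Qed.

Lemma cvg_gradW (Y : Type) (F : set_system Y) (FF : Filter F)
    (rr : Y -> 'I_m -> R) (f : Y -> 'I_n -> R) r mu j :
  in_Mbox T mu -> (forall i, rr y i @[y --> F] --> r i) ->
  (forall k, f y k @[y --> F] --> mu k) -> gradW (rr y) (f y) j @[y --> F] --> gradW r mu j.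
Proof.
move=> muT rr_r f_mu; apply: cvgB.
  by apply: cvg_sum_ord => i; apply: cvgM; [exact: rr_r|exact: cvg_delta].
apply: cvgMr; apply: cvgV; first by rewrite subr_eq0 gt_eqF ?in_Mbox_lt.
by apply: cvgB; [exact: cvg_cst|exact: f_mu].
Qed.

Lemma kkt_of_W_argmax r mu : (forall i, 0 <= r i) -> in_Mbox T mu ->
  (forall nu, in_Mbox T nu -> W r nu <= W r mu) -> kkt r mu.
Proof.
move=> r0 muT mumax; split=> // j.
apply: (first_order_argmax (G := W r)) => // [nu nuT|k]; first exact: W_le_tangent.
by apply: cvg_gradW => // [i|k']; [exact: cvg_cst|exact: cvg_perturb].
Qed.

Definition demand i t := rbar i * p i t.

Definition rho mu i := demand i (phi mu i).

Definition neg_surplus i t := demand i t * t - U i (demand i t).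

Hypotheses (hrbar : forall i, 0 < rbar i) (hp01 : forall i t, 0 <= p i t <= 1).
Hypothesis hUmax : forall i tau x, 0 <= x <= rbar i ->
  U i x - tau * x <= U i (demand i tau) - tau * demand i tau.

Lemma demand_box i t : 0 <= demand i t <= rbar i.
Proof.
have /andP[p0 p1] := hp01 i t; have rbar0 := hrbar i.
apply/andP; split; first exact: mulr_ge0 (ltW rbar0) p0.
exact: ler_piMr (ltW rbar0) p1.
Qed.

Lemma rho_box mu : in_Rbox rbar (rho mu).
Proof. by move=> i; exact: demand_box. Qed.

Lemma rho_ge0 mu i : 0 <= rho mu i.
Proof. by case/andP: (rho_box mu i). Qed.

Lemma W_rho_le r mu : in_Rbox rbar r -> W (rho mu) mu <= W r mu.
Proof.
move=> rR; rewrite /Defs.W lerD2r; apply: ler_sum => i _.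
by have := hUmax (phi mu i) (rR i); rewrite /rho; lra.
Qed.

Hypothesis hUconc : forall i x y t, 0 <= x <= rbar i -> 0 <= y <= rbar i -> x != y ->
  0 < t < 1 -> t * U i x + (1 - t) * U i y < U i (t * x + (1 - t) * y).

Lemma W_rho_unique r mu : in_Rbox rbar r -> W r mu <= W (rho mu) mu -> r = rho mu.
Proof.
move=> rR Wle; have gap i : 0 <= (r i * phi mu i - U i (r i))
    - (rho mu i * phi mu i - U i (rho mu i)).
  by have := hUmax (phi mu i) (rR i); rewrite /rho; lra.
have gap0 : \sum_i ((r i * phi mu i - U i (r i)) - (rho mu i * phi mu i - U i (rho mu i))) = 0.
  by move: Wle (W_rho_le mu rR); rewrite sumrB /Defs.W; lra.
apply/funext => i; apply: (strict_concave_argmax_unique (hUconc (i := i)) (hUmax (phi mu i))).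
- exact: demand_box.
- exact: rR.
- by move: (psumr_eq0P (fun i _ => gap i) gap0) => /(_ i isT); rewrite /rho; lra.
Qed.

Lemma neg_surplus_sandwich i t t' :
  demand i t' * (t' - t) <= neg_surplus i t' - neg_surplus i t <= demand i t * (t' - t).
Proof.
have := hUmax t' (demand_box i t); have := hUmax t (demand_box i t').
by rewrite /neg_surplus => ? ?; apply/andP; split; lra.
Qed.

Lemma neg_surplus_le i t t' : t <= t' -> neg_surplus i t <= neg_surplus i t'.
Proof.
move=> tt'; have /andP[le _] := neg_surplus_sandwich i t t'.
have : 0 <= demand i t' * (t' - t) by rewrite mulr_ge0 ?subr_ge0 //; case/andP: (demand_box i t').
lra.
Qed.

Hypothesis hpcont : forall i, continuous (p i).

Lemma continuous_neg_surplus i : continuous (neg_surplus i).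
Proof.
apply: (continuous_of_sandwich (d := demand i)); last exact: neg_surplus_sandwich.
by move=> t; apply: cvgMr; exact: hpcont.
Qed.

Lemma cvg_rho (Y : Type) (F : set_system Y) (FF : Filter F) (f : Y -> 'I_n -> R) mu i :
  (forall k, f y k @[y --> F] --> mu k) -> rho (f y) i @[y --> F] --> rho mu i.
Proof.
move=> f_mu; apply: cvgMr.
apply: (continuous_cvg _ (h := p i) (f := fun y => phi (f y) i)); first exact: hpcont.
exact: cvg_phi.
Qed.

(* W (rho mu) mu = min_r W r mu; its r-part is sum_i neg_surplus i (phi mu i), which is
   continuous without using continuity of U. *)
Definition dualW mu := W (rho mu) mu.

Lemma dualW_le_tangent mu nu : in_Mbox T mu -> in_Mbox T nu ->
  dualW mu <= dualW nu + \sum_j (mu j - nu j) * gradW (rho nu) nu j.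
Proof.
move=> muT nuT; apply: le_trans (W_le_tangent (rho_ge0 nu) muT nuT).
exact: W_rho_le (rho_box nu).
Qed.

Lemma dualW_le_slack mu j k : in_Mbox T mu ->
  dualW mu <= \sum_i neg_surplus i (kappa i k + T) + c j * ln (1 - mu j / T).
Proof.
move=> muT; apply: lerD.
  apply: ler_sum => i _; apply: neg_surplus_le.
  by rewrite (le_trans (phi_le_cost mu i k)) // lerD2l ltW ?in_Mbox_lt.
rewrite (bigD1 j) //= gerDl; apply: sumr_le0 => j' _.
rewrite pmulr_rle0 // ln_le0 // gerDl oppr_le0.
by case/andP: (muT j') => mu0 _; exact: divr_ge0 mu0 (ltW hT).
Qed.

Lemma cvg_dualW (Y : Type) (F : set_system Y) (FF : Filter F) (f : Y -> 'I_n -> R) mu :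
  in_Mbox T mu -> (forall k, f y k @[y --> F] --> mu k) -> dualW (f y) @[y --> F] --> dualW mu.
Proof.
move=> muT f_mu; apply: cvgD; apply: cvg_sum_ord => i.
  apply: (continuous_cvg _ (h := neg_surplus i) (f := fun y => phi (f y) i)).
    exact: continuous_neg_surplus.
  exact: cvg_phi.
apply: cvgMr; apply: (continuous_cvg _ (h := @ln R) (f := fun y => 1 - f y i / T)).
  by apply: continuous_ln; rewrite subr_gt0 ltr_pdivrMr // mul1r in_Mbox_lt.
apply: cvgB; first exact: cvg_cst.
by apply: cvgMl; exact: f_mu.
Qed.

Lemma dualW_lt_near_T : exists2 b : 'I_n -> R, forall j, 0 <= b j < T &
  forall mu j, in_Mbox T mu -> b j < mu j -> dualW mu < dualW (fun=> 0).
Proof.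
pose j0 := Ordinal hn; pose M := \sum_i neg_surplus i (kappa i j0 + T).
have zeroT : in_Mbox T (fun _ : 'I_n => 0) by move=> j /=; rewrite lexx hT.
have dualW0_le : dualW (fun=> 0) <= M.
  by have := dualW_le_slack j0 j0 zeroT; rewrite mul0r subr0 ln1 mulr0 addr0.
pose e j := expR ((dualW (fun=> 0) - M) / c j).
have e_le1 j : e j <= 1 by rewrite expR_le1 ler_pdivrMr // mul0r; lra.
have Te j : 0 < T * e j <= T.
  by rewrite mulr_gt0 ?expR_gt0 //=; exact: ler_piMr (ltW hT) (e_le1 j).
exists (fun j => T - T * e j / 2) => [j|mu j muT bmu]; first by case/andP: (Te j); lra.
have slack_lt : 1 - mu j / T < e j.
  have : (T - T * e j / 2) / T < mu j / T by rewrite ltr_pM2r ?invr_gt0.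
  have -> : (T - T * e j / 2) / T = 1 - e j / 2 by field; rewrite gt_eqF.
  by have : 0 < e j := expR_gt0 _; lra.
have ln_lt : ln (1 - mu j / T) < (dualW (fun=> 0) - M) / c j.
  rewrite -[X in _ < X]expRK ltr_ln ?posrE ?expR_gt0 //.
  by rewrite subr_gt0 ltr_pdivrMr // mul1r in_Mbox_lt.
have : c j * ln (1 - mu j / T) < dualW (fun=> 0) - M.
  by move: ln_lt; rewrite ltr_pdivlMr // mulrC.
by have := dualW_le_slack j j0 muT; rewrite -/M; lra.
Qed.

Lemma exists_dualW_argmax :
  exists2 mus, in_Mbox T mus & forall mu, in_Mbox T mu -> dualW mu <= dualW mus.
Proof.
have [b bT dualW_lt] := dualW_lt_near_T.
have boxT x : (forall j, 0 <= x j <= b j) -> in_Mbox T x.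
  move=> xb j; case/andP: (xb j) => x0 xbj; case/andP: (bT j) => _ bj.
  by rewrite x0 (le_lt_trans xbj).
have b0 j : 0 <= b j by case/andP: (bT j).
have [mus musb musmax] := box_argmax b0 (fun x xb _ _ FF _ => cvg_dualW FF (boxT x xb)).
exists mus => [|mu muT]; first exact: boxT.
have [[j bmu]|mub] := pselect (exists j, b j < mu j).
  apply: ltW (lt_le_trans (dualW_lt mu j muT bmu) (musmax _ _)) => k.
  by rewrite lexx b0.
apply: musmax => j; case/andP: (muT j) => -> _ /=.
by rewrite leNgt; apply/negP => bmu; apply: mub; exists j.
Qed.

Lemma exists_kkt_rho : exists mu, kkt (rho mu) mu.
Proof.
have [mus musT musmax] := exists_dualW_argmax.
exists mus; split=> // j.
apply: (first_order_argmax (G := dualW) (grad := fun nu => gradW (rho nu) nu) musT) => //.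
  by move=> nu nuT; exact: dualW_le_tangent.
move=> k /=; apply: (cvg_gradW _ (rr := fun h => rho (perturb mus k h))) => // [i|i].
  exact: cvg_rho (cvg_perturb k).
exact: cvg_perturb.
Qed.

Lemma entry_identity mu i j x s : 0 <= x -> (x != 0 -> 0 < s) ->
  kappa i j * x + eps * xlog x s = eps * kl x (s * delta mu i j) + eps * x
    - eps * (s * delta mu i j) - mu j * x - eps * x * ln (zsum mu i).
Proof.
move=> x0 xs; rewrite /kl /xlog; have [->|xn0] := eqVneq x 0; first by ring.
have x_gt0 : 0 < x by rewrite lt_neqAle eq_sym xn0.
have d_gt0 := delta_gt0 mu i j; have s_gt0 := xs xn0.
have -> : ln (x / s) = ln (x / (s * delta mu i j)) + ln (delta mu i j).
  have -> : x / s = x / (s * delta mu i j) * delta mu i j by field; rewrite !gt_eqF.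
  have sd_gt0 : 0 < x / (s * delta mu i j) := divr_gt0 x_gt0 (mulr_gt0 s_gt0 d_gt0).
  by rewrite lnM ?posrE.
by rewrite ln_delta; field; rewrite gt_eqF.
Qed.

Lemma row_identity mu i (x : 'I_n -> R) s : (forall j, 0 <= x j) -> \sum_j x j = s ->
  \sum_j (kappa i j * x j + eps * xlog (x j) s) =
  eps * \sum_j kl (x j) (s * delta mu i j) - \sum_j mu j * x j + s * phi mu i.
Proof.
move=> x0 xs; have s_pos j : x j != 0 -> 0 < s.
  move=> xj; rewrite -xs lt_neqAle sumr_ge0 // andbT eq_sym.
  apply: contra xj => /eqP sum0; apply/eqP.
  exact: (psumr_eq0P (fun k _ => x0 k) sum0 isT).
rewrite (eq_bigr _ (fun j _ => entry_identity mu i j (x0 j) (s_pos j))).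
rewrite !sumrB big_split /= -!mulr_sumr sumr_delta mulr1 -mulr_suml -mulr_sumr xs.
by rewrite /Defs.phi -/(zsum mu i); ring.
Qed.

Lemma objective_decomposition mu r X q : feasible T r X q ->
  objective kappa c eps r X q = eps * \sum_i \sum_j kl (X i j) (r i * delta mu i j)
    + \sum_i r i * phi mu i + \sum_j (beta (c j) (q j) - mu j * (q j / T)).
Proof.
move=> [X0 [rows cols]]; rewrite /objective addrAC.
have -> : \sum_i \sum_j kappa i j * X i j + eps * \sum_i \sum_j xlog (X i j) (r i) =
    \sum_i \sum_j (kappa i j * X i j + eps * xlog (X i j) (r i)).
  by rewrite mulr_sumr -big_split; apply: eq_bigr => i _; rewrite mulr_sumr -big_split.
rewrite (eq_bigr _ (fun i _ => row_identity mu i (X0 i) (rows i))) big_split !sumrB /=.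
have -> : \sum_i \sum_j mu j * X i j = \sum_j mu j * (q j / T).
  by rewrite exchange_big; apply: eq_bigr => j _; rewrite -cols mulr_sumr.
by rewrite -mulr_sumr; ring.
Qed.

Lemma kl_feasible r X q mu i j : feasible T r X q ->
  0 <= kl (X i j) (r i * delta mu i j) /\
  (kl (X i j) (r i * delta mu i j) = 0 -> X i j = r i * delta mu i j).
Proof.
move=> [X0 [rows _]]; have r0 : 0 <= r i by rewrite -rows sumr_ge0.
apply: kl_ge0; [exact: X0|exact: mulr_ge0 r0 (ltW (delta_gt0 mu i j))|].
move=> /eqP; rewrite mulf_eq0 (gt_eqF (delta_gt0 mu i j)) orbF => /eqP ri0.
have sum0 : \sum_k X i k = 0 by rewrite rows.
exact: (psumr_eq0P (fun k _ => X0 i k) sum0 isT).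
Qed.

Lemma feasible_flow r mu : (forall i, 0 <= r i) ->
  feasible T r (fun i j => r i * delta mu i j) (fun j => T * inflow r mu j).
Proof.
move=> r0; split=> [i j|]; first exact: mulr_ge0 (r0 i) (ltW (delta_gt0 mu i j)).
split=> [i|j]; first by rewrite -mulr_sumr sumr_delta mulr1.
by rewrite [T * _]mulrC mulfK ?gt_eqF.
Qed.

Lemma objective_gap r mu X q : (forall i, 0 <= r i) -> kkt r mu -> feasible T r X q ->
  objective kappa c eps r (fun i j => r i * delta mu i j) (fun j => T * inflow r mu j)
  + eps * \sum_i \sum_j kl (X i j) (r i * delta mu i j) <= objective kappa c eps r X q.
Proof.
move=> r0 [muT kkt_mu] feas.
rewrite (objective_decomposition mu feas) (objective_decomposition mu (feasible_flow mu r0)).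
rewrite (eq_bigr (fun=> 0)) ?big1_eq ?mulr0 ?add0r => [|i _]; last first.
  by rewrite big1 // => j _; exact: kl_id.
suff : \sum_j (beta (c j) (T * inflow r mu j) - mu j * (T * inflow r mu j / T)) <=
    \sum_j (beta (c j) (q j) - mu j * (q j / T)) by lra.
apply: ler_sum => j _.
have mu_j : mu j = mu_of T (c j) (T * inflow r mu j).
  by apply/mu_of_spec; rewrite ?inflow_ge0 //; exact: kkt_mu.
by have := beta_subgradient (T * inflow r mu j) (q j) hT (hc j); rewrite -mu_j; lra.
Qed.

Lemma kkt_solves_transport r mu : (forall i, 0 <= r i) -> kkt r mu ->
  solves_transport kappa c T eps r (fun i j => r i * delta mu i j) (fun j => T * inflow r mu j).
Proof.
move=> r0 kkt_mu; split=> [|X q feas]; first exact: feasible_flow.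
apply: le_trans (objective_gap r0 kkt_mu feas); rewrite lerDl.
apply: mulr_ge0 (ltW heps) _; apply: sumr_ge0 => i _; apply: sumr_ge0 => j _.
exact: (kl_feasible mu i j feas).1.
Qed.

Lemma solves_transport_unique r mu X q : (forall i, 0 <= r i) -> kkt r mu ->
  solves_transport kappa c T eps r X q -> X = fun i j => r i * delta mu i j.
Proof.
move=> r0 kkt_mu [feas opt]; have kl0 i j := (kl_feasible mu i j feas).1.
have sum_kl0 : \sum_i \sum_j kl (X i j) (r i * delta mu i j) = 0.
  apply/eqP; rewrite eq_le sumr_ge0 => [|i _]; last exact: sumr_ge0.
  have := opt _ _ (feasible_flow mu r0); have := objective_gap r0 kkt_mu feas.
  by rewrite andbT -(pmulr_rle0 _ heps); lra.
apply/funext => i; apply/funext => j; apply: (kl_feasible mu i j feas).2.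
have row0 : \sum_j kl (X i j) (r i * delta mu i j) = 0.
  exact: (psumr_eq0P (fun i _ => sumr_ge0 _ (fun j _ => kl0 i j)) sum_kl0 isT).
exact: (psumr_eq0P (fun j _ => kl0 i j) row0 isT).
Qed.

Lemma equilibriumP X q mu r :
  equilibrium p c T eps kappa rbar X q mu r <->
  [/\ kkt r mu, r = rho mu, X = (fun i j => r i * delta mu i j)
    & q = (fun j => T * inflow r mu j)].
Proof.
split=> [[mu_q [r_mu [X_r cols]]]|[kkt_mu r_rho -> ->]].
  have r_rho : r = rho mu by apply/funext => i; rewrite r_mu.
  have X_eq : X = (fun i j => r i * delta mu i j) by do 2 apply/funext => ?; rewrite X_r.
  have q_eq : q = (fun j => T * inflow r mu j).
    by apply/funext => j; rewrite /inflow -(eq_bigr _ (fun i _ => X_r i j)) cols mulrC mulfVK ?gt_eqF.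
  have muT j : 0 <= mu j < T by rewrite mu_q mu_of_range.
  split=> //; split=> // j.
  have s0 : 0 <= inflow r mu j by rewrite r_rho; apply: inflow_ge0 => i; exact: rho_ge0.
  by apply/(mu_of_spec hT (hc j) s0 (muT j)); rewrite mu_q q_eq.
subst r; have [muT kkt_j] := kkt_mu; split=> [j|].
  have s0 : 0 <= inflow (rho mu) mu j by apply: inflow_ge0; exact: rho_ge0.
  by apply/(mu_of_spec hT (hc j) s0 (muT j)); exact: kkt_j.
by split=> //; split=> // j; rewrite (feasible_flow mu (rho_ge0 mu)).2.2.
Qed.

Lemma saddle_transport_equilibrium X q mu r :
  saddle U c T kappa eps rbar r mu -> solves_transport kappa c T eps r X q ->
  equilibrium p c T eps kappa rbar X q mu r.
Proof.
move=> [rR [muT [Wmax Wmin]]] tr; have r_rho := W_rho_unique rR (Wmin _ (rho_box mu)).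
have r0 i : 0 <= r i by rewrite r_rho rho_ge0.
have kkt_mu := kkt_of_W_argmax r0 muT Wmax.
have X_eq := solves_transport_unique r0 kkt_mu tr.
apply/equilibriumP; split=> //; apply/funext => j.
by move: tr.1.2.2 => /(_ j); rewrite X_eq /inflow => ->; rewrite mulrC mulfVK ?gt_eqF.
Qed.

Lemma equilibrium_saddle_transport X q mu r :
  equilibrium p c T eps kappa rbar X q mu r ->
  saddle U c T kappa eps rbar r mu /\ solves_transport kappa c T eps r X q.
Proof.
move=> /equilibriumP[kkt_mu r_rho -> ->]; have r0 i : 0 <= r i by rewrite r_rho rho_ge0.
split; last exact: kkt_solves_transport.
split; first by rewrite r_rho; exact: rho_box.
split; first exact: kkt_mu.1.
split=> [nu nuT|r' r'R]; first exact: kkt_W_le.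
by rewrite r_rho; exact: W_rho_le.
Qed.

Lemma equilibrium_exists : exists X q mu r, equilibrium p c T eps kappa rbar X q mu r.
Proof.
have [mu kkt_mu] := exists_kkt_rho.
exists (fun i j => rho mu i * delta mu i j), (fun j => T * inflow (rho mu) mu j), mu, (rho mu).
by apply/equilibriumP.
Qed.

Lemma equilibrium_unique X q mu r X' q' mu' r' :
  equilibrium p c T eps kappa rbar X q mu r ->
  equilibrium p c T eps kappa rbar X' q' mu' r' ->
  X' = X /\ q' = q /\ mu' = mu /\ r' = r.
Proof.
move=> /equilibriumP[kkt_mu r_rho -> ->] /equilibriumP[kkt_mu' r'_rho -> ->]; subst r r'.
suff -> : mu' = mu by [].
case: (pselect (mu' = mu)) => // ne; exfalso.
have := kkt_W_lt (rho_ge0 mu) kkt_mu kkt_mu'.1 ne.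
have := W_rho_le mu (rho_box mu'); have := W_rho_le mu' (rho_box mu).
by have := kkt_W_le (rho_ge0 mu') kkt_mu' kkt_mu.1; lra.
Qed.

End Model.

Theorem theorem3 (R : realType) (m n : nat)
  (c : 'I_n -> R) (T eps : R) (kappa : 'I_m -> 'I_n -> R) (rbar : 'I_m -> R)
  (p : 'I_m -> R -> R) (U : 'I_m -> R -> R)
  (hn : (1 <= n)%N) (hm : (1 <= m)%N)
  (hc : forall j, 0 < c j) (hT : 0 < T) (heps : 0 < eps)
  (hkappa : forall i j, 0 <= kappa i j) (hrbar : forall i, 0 < rbar i)
  (hp01 : forall i x, 0 <= p i x <= 1)
  (hpcont : forall i, continuous (p i))
  (hpmono : forall i x y, x <= y -> p i y <= p i x)
  (hp1 : forall i x, x <= 0 -> p i x = 1)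
  (hplim : forall i, p i x @[x --> +oo] --> 0)
  (hUcont : forall i, {within [set x | 0 <= x <= rbar i], continuous (U i)})
  (hUmono : forall i x y, 0 <= x -> x <= y -> y <= rbar i -> U i x <= U i y)
  (hUconc : forall i x y t, 0 <= x <= rbar i -> 0 <= y <= rbar i -> x != y ->
     0 < t < 1 -> t * U i x + (1 - t) * U i y < U i (t * x + (1 - t) * y))
  (hUmax : forall i tau r, 0 <= r <= rbar i ->
     U i r - tau * r <= U i (rbar i * p i tau) - tau * (rbar i * p i tau)) :
  (forall (X : 'I_m -> 'I_n -> R) (q mu : 'I_n -> R) (r : 'I_m -> R),
     (saddle U c T kappa eps rbar r mu /\ solves_transport kappa c T eps r X q)
     <-> equilibrium p c T eps kappa rbar X q mu r) /\
  (exists (X : 'I_m -> 'I_n -> R) (q mu : 'I_n -> R) (r : 'I_m -> R),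
     equilibrium p c T eps kappa rbar X q mu r /\
     forall (X' : 'I_m -> 'I_n -> R) (q' mu' : 'I_n -> R) (r' : 'I_m -> R),
       equilibrium p c T eps kappa rbar X' q' mu' r' ->
       X' = X /\ q' = q /\ mu' = mu /\ r' = r).
Proof.
split=> [X q mu r|]; first split.
- by case; exact: (saddle_transport_equilibrium (p := p) hn hc hT heps hrbar hp01 hUmax hUconc).
- exact: (equilibrium_saddle_transport (U := U) hn hc hT heps hrbar hp01 hUmax).
have [X [q [mu [r eq]]]] := equilibrium_exists kappa hn hc hT heps hrbar hp01 hUmax hpcont.
exists X, q, mu, r; split=> // X' q' mu' r'.
exact: (equilibrium_unique (U := U) hn hc hT heps hrbar hp01 hUmax).
Qed.
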